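(* Let $\mathcal N$, $I_{\mathcal N}$, $S_{i,j}$ and $K_{\mathcal N}$ be as in the context. Then there exists $(t_{i,j})_{(i,j)\in I_{\mathcal N}}\in K_{\mathcal N}$ with $\sum_{(i,j)\in I_{\mathcal N}}t_{i,j}=\#\bigcup_{(i,j)\in I_{\mathcal N}}S_{i,j}$.
   Context: Fix positive integers $n_0^{(1)},n_0^{(2)},d_0,f_1^{(1)},f_1^{(2)},s_1$ with $f_1^{(r)}\le n_0^{(r)}$, and let $n_1^{(r)}=\lfloor (n_0^{(r)}-f_1^{(r)})/s_1\rfloor+1$ for $r=1,2$. Let $I_{\mathcal N}=\{(i,j):1\le i\le n_1^{(1)},1\le j\le n_1^{(2)}\}$, and for $(i,j)\in I_{\mathcal N}$ let $S_{i,j}=\{(a+(i-1)s_1,\ b+(j-1)s_1,\ c):1\le a\le f_1^{(1)},1\le b\le f_1^{(2)},1\le c\le d_0\}$ (the indices of input neurons used to compute the pre-activations at spatial position $(i,j)$ of a one-layer CNN with these filter sizes and stride). Let $K_{\mathcal N}=\{(t_{i,j})_{(i,j)\in I_{\mathcal N}}: t_{i,j}\in\mathbb N,\ \sum_{(i,j)\in J}t_{i,j}\le \#\bigcup_{(i,j)\in J}S_{i,j}\text{ for all } J\subseteq I_{\mathcal N}\}$. *)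

From mathcomp Require Import all_boot.
Unset Printing Implicit Defensive.

(* Zero-based indices throughout: spatial output position (i,j) with
   i < n1_1, j < n1_2; input neuron (p,q,c) with p < n0_1, q < n0_2, c < d0.
   The paper's 1-based (i,j) and (a,b,c) correspond to i+1, a+1, etc. *)

Definition out_size (n0 f s : nat) : nat := (n0 - f) %/ s + 1.

Definition out_index (n01 n02 f1 f2 s : nat) : finType :=
  ('I_(out_size n01 f1 s) * 'I_(out_size n02 f2 s))%type.

Definition in_index (n01 n02 d0 : nat) : finType :=
  ('I_n01 * 'I_n02 * 'I_d0)%type.

Definition S_set (n01 n02 d0 f1 f2 s : nat)
    (ij : out_index n01 n02 f1 f2 s) : {set in_index n01 n02 d0} :=
  [set x : in_index n01 n02 d0 |
     [exists a : 'I_f1, exists b : 'I_f2,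
        (nat_of_ord x.1.1 == a + ij.1 * s) && (nat_of_ord x.1.2 == b + ij.2 * s)]].

Definition in_K (n01 n02 d0 f1 f2 s : nat)
    (t : {ffun out_index n01 n02 f1 f2 s -> nat}) : Prop :=
  forall J : {set out_index n01 n02 f1 f2 s},
    \sum_(ij in J) t ij <= #|\bigcup_(ij in J) S_set n01 n02 d0 f1 f2 s ij|.

From mathcomp Require Import all_boot.

(* The bound in K_N is a Hall-type condition, and its extremal case is met by
   an "ownership" assignment that works for ANY finite family of finite sets
   (S_i)_{i in I} with I nonempty: send every point x of the union U to one
   chosen owner i with x in S_i, and let t_i count the points owned by i.
   Then for every J, the sum of t over J counts the points owned by J, all of
   which lie in the union of the S_i over J, so the bound holds; for J = I
   every point of U is counted exactly once, so equality holds. *)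

Section Ownership.
Variables (I T : finType) (S : I -> {set T}) (i0 : I).

Definition owner (x : T) : I := odflt i0 [pick i | x \in S i].

Lemma owner_mem (x : T) : x \in \bigcup_i S i -> x \in S (owner x).
Proof.
move=> /bigcupP[i _ xSi]; rewrite /owner; case: pickP => [//|noS].
by rewrite noS in xSi.
Qed.

Definition owned_count : {ffun I -> nat} :=
  [ffun i => #|[set x in \bigcup_j S j | owner x == i]|].

Lemma sum_owned_count (J : {set I}) :
  \sum_(i in J) owned_count i = #|[set x in \bigcup_j S j | owner x \in J]|.
Proof.
rewrite -sum1dep_card (partition_big owner (mem J)); last by move=> x /andP[].
apply: eq_bigr => i iJ; rewrite ffunE -sum1dep_card; apply: eq_bigl => x.
by case: (eqVneq (owner x) i) => [->|]; rewrite ?iJ ?andbT ?andbF.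
Qed.

(* The points owned by J lie in the union of the S_i over J. *)
Lemma owned_count_bounded (J : {set I}) :
  \sum_(i in J) owned_count i <= #|\bigcup_(i in J) S i|.
Proof.
rewrite sum_owned_count; apply/subset_leq_card/subsetP => x.
rewrite inE => /andP[xU ownJ]; apply/bigcupP; exists (owner x) => //.
exact: owner_mem.
Qed.

(* Every point of the union has exactly one owner, so nothing is lost. *)
Lemma owned_count_total :
  \sum_i owned_count i = #|\bigcup_i S i|.
Proof.
have := sum_owned_count [set: I].
rewrite (eq_bigl (fun _ => true)); last by move=> i; rewrite inE.
by move=> ->; apply: eq_card => x; rewrite !inE andbT.
Qed.

End Ownership.

Arguments owned_count {I T} S i0.

Lemma extremal_hall_weights {I T : finType} (S : I -> {set T}) (i0 : I) :
  exists t : {ffun I -> nat},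
    (forall J : {set I}, \sum_(i in J) t i <= #|\bigcup_(i in J) S i|) /\
    \sum_i t i = #|\bigcup_i S i|.
Proof.
exists (owned_count S i0); split.
- exact: owned_count_bounded.
- exact: owned_count_total.
Qed.

Theorem lemma3 (n01 n02 d0 f1 f2 s : nat)
  (hn01 : 0 < n01) (hn02 : 0 < n02) (hd0 : 0 < d0)
  (hf1 : 0 < f1) (hf2 : 0 < f2) (hs : 0 < s)
  (hf1n : f1 <= n01) (hf2n : f2 <= n02) :
  exists t : {ffun out_index n01 n02 f1 f2 s -> nat},
    in_K n01 n02 d0 f1 f2 s t /\
    \sum_(ij : out_index n01 n02 f1 f2 s) t ij
      = #|\bigcup_(ij : out_index n01 n02 f1 f2 s) S_set n01 n02 d0 f1 f2 s ij|.
Proof.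
have pos1 : 0 < out_size n01 f1 s by rewrite /out_size addn1.
have pos2 : 0 < out_size n02 f2 s by rewrite /out_size addn1.
have [t [t_bounded t_total]] :=
  extremal_hall_weights (S_set n01 n02 d0 f1 f2 s) (Ordinal pos1, Ordinal pos2).
by exists t; split.
Qed.
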